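(* Let $g$ be a balanced $n$-variable Boolean function, $b\in\mathbb{F}_2$, let $g_b$ be the $(n+1)$-variable function $$g_b(X_{n+1},X_n,\ldots,X_1)=(1\oplus X_{n+1})\,g(X_n,\ldots,X_1)\oplus X_{n+1}\bigl(b\oplus g(1\oplus X_n,\ldots,1\oplus X_1)\bigr),$$ and let $G_b=g_b\diamond g$ (an $n(n+1)$-variable function). Then $$\frac{H_\infty(G_b)}{\mathrm{Inf}(G_b)}=\frac{\min_{i\in\{0,\ldots,n+1\},\ a_i>0}\bigl(-\log a_i+i\,H_\infty(g)\bigr)}{\mathrm{Inf}(g)\bigl(\mathrm{Inf}(g)+\epsilon_b(g)\bigr)},$$ where $a_i=\max_{\mathbf{w}\in\mathbb{F}_2^{n+1},\ \mathrm{wt}(\mathbf{w})=i}W_{g_b}^2(\mathbf{w})$ and $\epsilon_b(g)=\sum_{\bm{\alpha}\in\mathbb{F}_2^n,\ \mathrm{wt}(\bm{\alpha})\not\equiv b\pmod 2}W_g^2(\bm{\alpha})$. Moreover, if there is an integer $t$ with $0\le t<n$ and $t\equiv b\pmod 2$ such that $g$ is plateaued and $t$-resilient but not $(t+1)$-resilient, then $$\frac{H_\infty(G_b)}{\mathrm{Inf}(G_b)}=\frac{H_\infty(g)}{\mathrm{Inf}(g)}\cdot\frac{t+3}{\mathrm{Inf}(g)+\epsilon_b(g)}.$$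
   Context: Boolean functions are maps $\mathbb{F}_2^n\to\mathbb{F}_2$; balanced means value $1$ on exactly $2^{n-1}$ inputs. Walsh transform: $W_f(\bm{\alpha})=2^{-n}\sum_{\mathbf{x}}(-1)^{f(\mathbf{x})\oplus\langle\mathbf{x},\bm{\alpha}\rangle}$, $\langle\mathbf{x},\bm{\alpha}\rangle=\bigoplus_ix_i\alpha_i$. Logarithms base 2. Min-entropy: $H_\infty(f)=\min_{\bm{\alpha}:W_f^2(\bm{\alpha})\ne0}\log(1/W_f^2(\bm{\alpha}))$. Influence: $\mathrm{Inf}(f)=\sum_{i=1}^n\Pr_{\mathbf{x}}[f(\mathbf{x})\ne f(\mathbf{x}\oplus\mathbf{e}_i)]=\sum_{\bm{\alpha}}\mathrm{wt}(\bm{\alpha})W_f^2(\bm{\alpha})$. Disjoint composition: for $f$ on $k$ variables and $h$ on $l$ variables, $(f\diamond h)(\mathbf{x})=f(h(\mathbf{x}^{(1)}),\ldots,h(\mathbf{x}^{(k)}))$ with $\mathbf{x}^{(i)}=(x_{(i-1)l+1},\ldots,x_{il})$. A function $f$ is $t$-resilient if $W_f(\bm{\alpha})=0$ for all $\bm{\alpha}$ with $\mathrm{wt}(\bm{\alpha})\le t$; $f$ is plateaued if there is $c$ such that $W_f(\bm{\alpha})\in\{0,c,-c\}$ for all $\bm{\alpha}$. *)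

From HB Require Import structures.
From mathcomp Require Import all_boot all_order all_algebra.
From mathcomp Require Import all_classical all_reals all_analysis.
Set Implicit Arguments. Unset Strict Implicit. Unset Printing Implicit Defensive.
Import Order.TTheory GRing.Theory Num.Theory.
Local Open Scope ring_scope.

Definition bvec (n : nat) := {ffun 'I_n -> bool}.

Definition wt n (a : bvec n) : nat := #|[set i | a i]|.

Definition dotb n (x a : bvec n) : bool := odd (\sum_(i < n) (x i && a i)).

Section Defs.
Variable R : realType.

Definition log2 (x : R) : R := ln x / ln 2.

(* balanced: exactly 2^(n-1) ones, i.e. 2 * #ones = 2^n *)
Definition balanced n (f : bvec n -> bool) : Prop :=
  (#|[set x | f x]| * 2 = 2 ^ n)%N.

Definition walsh n (f : bvec n -> bool) (a : bvec n) : R :=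
  (2 ^+ n)^-1 * \sum_(x : bvec n) (-1) ^+ (f x (+) dotb x a).

Definition Hmin n (f : bvec n -> bool) : R :=
  fine (\big[Order.min/+oo%E]_(a : bvec n | walsh f a ^+ 2 != 0)
          (log2 (walsh f a ^+ 2)^-1)%:E).

Definition flip n (x : bvec n) (i : 'I_n) : bvec n :=
  [ffun j => if j == i then ~~ x j else x j].

Definition Inf n (f : bvec n -> bool) : R :=
  \sum_(i < n) (#|[set x : bvec n | f x != f (flip x i)]|%:R / (2 ^+ n)).

Definition resilient n (f : bvec n -> bool) (t : nat) : Prop :=
  forall a : bvec n, (wt a <= t)%N -> walsh f a = 0.

Definition plateaued n (f : bvec n -> bool) : Prop :=
  exists c : R, forall a : bvec n,
    walsh f a = 0 \/ walsh f a = c \/ walsh f a = - c.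

Definition epsb n (g : bvec n -> bool) (b : bool) : R :=
  \sum_(a : bvec n | odd (wt a) != b) walsh g a ^+ 2.

End Defs.

(* block indexing for disjoint composition: x^(i)_j = x_{i*l + j} *)
Lemma blk_lt k l (i : 'I_k) (j : 'I_l) : (i * l + j < k * l)%N.
Proof.
have Hj := ltn_ord j; have Hi := ltn_ord i.
apply: (@leq_trans (i * l + l)); first by rewrite ltn_add2l.
by rewrite -mulSnr leq_mul2r Hi orbT.
Qed.

Definition blk k l (i : 'I_k) (j : 'I_l) : 'I_(k * l) := Ordinal (blk_lt i j).

Definition bool_dcomp k l (f : bvec k -> bool) (h : bvec l -> bool)
  (x : bvec (k * l)) : bool :=
  f [ffun i : 'I_k => h [ffun j : 'I_l => x (blk i j)]].

(* g_b on n+1 variables: coordinate ord_max is X_{n+1}, coordinates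
   0..n-1 are X_1..X_n *)
Definition gb n (g : bvec n -> bool) (b : bool) (w : bvec n.+1) : bool :=
  let X := w ord_max in
  let y : bvec n := [ffun i : 'I_n => w (widen_ord (leqnSn n) i)] in
  let yc : bvec n := [ffun i : 'I_n => ~~ y i] in
  ((~~ X) && g y) (+) (X && (b (+) g yc)).

Definition acoef (R : realType) n (g : bvec n -> bool) (b : bool) (i : nat) : R :=
  \big[Num.max/0]_(w : bvec n.+1 | wt w == i) walsh R (gb g b) w ^+ 2.

From HB Require Import structures.
From mathcomp Require Import all_boot all_order all_algebra.
From mathcomp Require Import all_classical all_reals all_analysis.
From mathcomp Require Import ring.
Import Order.TTheory GRing.Theory Num.Theory.
Local Open Scope ring_scope.
Set Implicit Arguments. Unset Strict Implicit.

(* Everything is read off the Walsh spectrum.  With the characters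
   chi_a(x) = (-1)^<x,a> we get Fourier inversion, Parseval and the spectral
   formula Inf(f) = sum_a wt(a) W_f(a)^2.  Two spectra are then computed:
   - for g_b, W_{g_b}(a, d) = W_g(a) when d = b + wt(a) (mod 2) and 0
     otherwise, whence Inf(g_b) = Inf(g) + eps_b(g);
   - for a disjoint composition f <> h with h balanced, writing a vector as a
     family A of k blocks, W_{f<>h}(A) = W_f(pat A) * prod_(A_i <> 0) W_h(A_i),
     where pat A marks the nonzero blocks; whence Inf(f <> h) = Inf(f) Inf(h)
     and H(f <> h) = min_i (-log a_i(f) + i H(h)), a_i(f) being the largest
     squared Walsh coefficient of f at weight i.
   The first claim is the quotient of these formulas for f = g_b, h = g.  In
   the plateaued t-resilient case every a_i > 0 equals 2^-H(g) and the
   lightest nonzero coefficient of g_b has weight t + 2, so the minimum is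
   (t + 3) H(g). *)
Definition bxor n (x y : bvec n) : bvec n := [ffun i => x i (+) y i].
Definition bz n : bvec n := [ffun _ => false].
Definition unitv n (i : 'I_n) : bvec n := [ffun j => j == i].
Definition bcompl n (y : bvec n) : bvec n := [ffun i => ~~ y i].

Lemma bxor_eq0 n (x y : bvec n) : (bxor x y == bz n) = (x == y).
Proof.
apply/eqP/eqP => [xy0|->]; apply/ffunP => i; last by rewrite !ffunE addbb.
by have := congr1 (fun f : bvec n => f i) xy0; rewrite !ffunE; case: (x i); case: (y i).
Qed.

Lemma bxor0 n (x : bvec n) : bxor x (bz n) = x.
Proof. by apply/ffunP => i; rewrite !ffunE addbF. Qed.

Lemma flipE n (x : bvec n) i : flip x i = bxor x (unitv i).
Proof. by apply/ffunP => j; rewrite !ffunE; case: eqP => _; rewrite ?addbT ?addbF. Qed.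

Lemma bcomplK n : involutive (@bcompl n).
Proof. by move=> y; apply/ffunP => i; rewrite !ffunE negbK. Qed.

Lemma wtE n (a : bvec n) : wt a = (\sum_i (a i : nat))%N.
Proof.
rewrite /wt -sum1_card big_mkcond /=; apply: eq_bigr => i _; rewrite inE.
by case: (a i).
Qed.

Lemma wt0 n : wt (bz n) = 0%N.
Proof. by rewrite wtE big1 // => i _; rewrite ffunE. Qed.

Lemma wt_le n (w : bvec n) : (wt w <= n)%N.
Proof. by rewrite /wt (leq_trans (max_card _)) // card_ord. Qed.

Section WalshAnalysis.
Variable R : realType.

Definition chi n (x a : bvec n) : R := (-1) ^+ dotb x a.

Lemma chiE n (x a : bvec n) : chi x a = \prod_i (-1) ^+ (x i && a i).
Proof.
rewrite /chi /dotb signr_odd.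
by rewrite (big_morph (fun m : nat => (-1 : R) ^+ m) (@exprD _ _) (expr0 _)).
Qed.

Lemma chiC n (x a : bvec n) : chi x a = chi a x.
Proof. by rewrite !chiE; apply: eq_bigr => i _; rewrite andbC. Qed.

Lemma chi_bxor n (x y a : bvec n) : chi (bxor x y) a = chi x a * chi y a.
Proof.
rewrite !chiE -big_split /=; apply: eq_bigr => i _; rewrite ffunE.
by case: (x i); case: (y i); case: (a i); rewrite /= ?expr0 ?expr1 ?mulr1 ?mul1r ?mulrNN ?mulr1.
Qed.

Lemma chi0 n (a : bvec n) : chi (bz n) a = 1.
Proof. by rewrite chiE big1 // => i _; rewrite ffunE. Qed.

Lemma chi_unitv n (i : 'I_n) (a : bvec n) : chi (unitv i) a = (-1) ^+ a i.
Proof.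
rewrite chiE (bigD1 i) //= big1 ?mulr1; first by rewrite ffunE eqxx.
by move=> j /negbTE ji; rewrite ffunE ji.
Qed.

Lemma chi_compl n (y a : bvec n) : chi (bcompl y) a = chi y a * (-1) ^+ odd (wt a).
Proof.
rewrite signr_odd wtE !chiE.
rewrite (big_morph (fun m : nat => (-1 : R) ^+ m) (@exprD _ _) (expr0 _)) -big_split /=.
apply: eq_bigr => i _; rewrite ffunE.
by case: (y i); case: (a i); rewrite /= ?expr0 ?expr1 ?mulr1 ?mul1r ?mulrNN ?mulr1.
Qed.

Lemma two_expf_neq0 n : (2 ^+ n : R) != 0.
Proof. by rewrite expf_neq0 // pnatr_eq0. Qed.

Lemma sum_chi n (a : bvec n) : \sum_x chi x a = if a == bz n then 2 ^+ n else 0.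
Proof.
under eq_bigr do rewrite chiE.
rewrite -(bigA_distr_bigA (fun i (c : bool) => (-1 : R) ^+ (c && a i))).
under eq_bigr do rewrite big_bool /=.
case: eqP => [->|/eqP a_neq0].
  by under eq_bigr do rewrite ffunE /= expr0; rewrite prodr_const card_ord.
have [i ai] : exists i, a i.
  apply/existsP; apply: contraNT a_neq0; rewrite negb_exists => /forallP a_false.
  by apply/eqP/ffunP => i; rewrite ffunE; apply/negbTE.
by rewrite (bigD1 i) //= ai /= expr1 expr0 addNr mul0r.
Qed.

Lemma sum_chi_chi n (y x : bvec n) :
  \sum_a chi y a * chi x a = if y == x then 2 ^+ n else 0.
Proof. by under eq_bigr do rewrite -chi_bxor chiC; rewrite sum_chi bxor_eq0. Qed.

Lemma walshE n (f : bvec n -> bool) a :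
  walsh R f a = (2 ^+ n)^-1 * \sum_x (-1) ^+ f x * chi x a.
Proof. by rewrite /walsh; congr (_ * _); apply: eq_bigr => x _; rewrite signr_addb. Qed.

Lemma walsh_inversion n (f : bvec n -> bool) x :
  \sum_a walsh R f a * chi x a = (-1) ^+ f x.
Proof.
under eq_bigr do rewrite walshE big_distrr mulr_suml.
rewrite exchange_big /=.
under eq_bigr do (under eq_bigr do rewrite -!mulrA; rewrite -!big_distrr /= sum_chi_chi).
rewrite (bigD1 x) //= eqxx big1 ?addr0; last by move=> y /negbTE ->; rewrite !mulr0.
by rewrite mulrC -mulrA mulrV ?mulr1 // unitfE two_expf_neq0.
Qed.

Lemma walsh_autocorr n (f : bvec n -> bool) v :
  \sum_a walsh R f a ^+ 2 * chi v a =
  (2 ^+ n)^-1 * \sum_x (-1) ^+ f x * (-1) ^+ f (bxor x v).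
Proof.
transitivity (\sum_a (2 ^+ n)^-1 *
    \sum_x (-1) ^+ f x * (walsh R f a * chi (bxor x v) a)).
  apply: eq_bigr => a _; rewrite expr2 {1}walshE; set w := walsh R f a; clearbody w.
  rewrite -!mulrA; congr (_ * _); rewrite mulr_suml.
  by apply: eq_bigr => x _; rewrite chi_bxor; ring.
rewrite -big_distrr /= exchange_big /=; congr (_ * _).
by apply: eq_bigr => x _; rewrite -big_distrr /= walsh_inversion.
Qed.

Lemma parseval n (f : bvec n -> bool) : \sum_a walsh R f a ^+ 2 = 1.
Proof.
have := walsh_autocorr f (bz n); under eq_bigr do rewrite chi0 mulr1.
move=> ->; under eq_bigr do rewrite bxor0 -expr2 sqrr_sign.
by rewrite sumr_const card_ffun card_bool card_ord -natrX mulVf // pnatr_eq0 expn_eq0.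
Qed.

Lemma walsh_support n (f : bvec n -> bool) : exists a, walsh R f a ^+ 2 != 0.
Proof.
apply/existsP; apply: contraT; rewrite negb_exists => /forallP all0.
have := parseval f; rewrite big1 => [/eqP|a _]; first by rewrite eq_sym oner_eq0.
by move: (all0 a); rewrite negbK => /eqP.
Qed.

Lemma walsh0_balanced n (f : bvec n -> bool) : balanced f -> walsh R f (bz n) = 0.
Proof.
rewrite /balanced => bal; rewrite walshE; under eq_bigr do rewrite chiC chi0 mulr1.
have -> : \sum_x (-1) ^+ f x = \sum_x (1 - 2 * (f x)%:R) :> R.
  by apply: eq_bigr => x _; case: (f x); rewrite /= ?expr1 ?expr0; ring.
rewrite sumrB sumr_const card_ffun card_bool card_ord -big_distrr /= -natr_sum.
have -> : (\sum_x (f x : nat))%N = #|[set x | f x]|.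
  by rewrite -sum1_card [in RHS]big_mkcond /=; apply: eq_bigr => x _; rewrite inE; case: (f x).
by rewrite -natrM mulnC bal natrX subrr mulr0.
Qed.

Lemma Inf_walsh n (f : bvec n -> bool) :
  Inf R f = \sum_a (wt a)%:R * walsh R f a ^+ 2.
Proof.
transitivity (\sum_i \sum_(a : bvec n) (a i : nat)%:R * walsh R f a ^+ 2); last first.
  by rewrite exchange_big /=; apply: eq_bigr => a _; rewrite -mulr_suml -natr_sum wtE.
apply: eq_bigr => i _.
have -> : #|[set x : bvec n | f x != f (flip x i)]|%:R
     = \sum_x (1 - (-1) ^+ f x * (-1) ^+ f (bxor x (unitv i))) / 2 :> R.
  rewrite -sum1_card big_mkcond /= natr_sum; apply: eq_bigr => x _.
  by rewrite inE flipE; case: (f x); case: (f (bxor x (unitv i))); rewrite /= ?expr0 ?expr1; field.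
have -> : \sum_(a : bvec n) (a i : nat)%:R * walsh R f a ^+ 2
     = (\sum_a walsh R f a ^+ 2 - \sum_a walsh R f a ^+ 2 * chi (unitv i) a) / 2.
  rewrite -sumrB mulr_suml; apply: eq_bigr => a _.
  by rewrite chi_unitv; case: (a i); rewrite /= ?expr0 ?expr1; field.
rewrite parseval walsh_autocorr -mulr_suml sumrB sumr_const card_ffun card_bool card_ord.
by have := two_expf_neq0 n; rewrite natrX => ?; field.
Qed.

End WalshAnalysis.

(* F_2^(n+1) = F_2^n x F_2: ext y c appends the last coordinate c (the
   variable X_(n+1) of g_b) to y, and restr drops it. *)
Definition ext n (y : bvec n) (c : bool) : bvec n.+1 :=
  [ffun j : 'I_n.+1 => if (insub (val j) : option 'I_n) is Some i then y i else c].
Definition restr n (x : bvec n.+1) : bvec n := [ffun i => x (widen_ord (leqnSn n) i)].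

Lemma ext_widen n (y : bvec n) c i : ext y c (widen_ord (leqnSn n) i) = y i.
Proof.
rewrite ffunE; case: insubP => [j _ /= ji|]; last by rewrite /= ltn_ord.
by congr (y _); apply: val_inj.
Qed.

Lemma ext_max n (y : bvec n) c : ext y c ord_max = c.
Proof. by rewrite ffunE; case: insubP => [j /=|//]; rewrite ltnn. Qed.

Lemma restr_ext n (y : bvec n) c : restr (ext y c) = y.
Proof. by apply/ffunP => i; rewrite ffunE ext_widen. Qed.

Lemma ext_restr n (x : bvec n.+1) : ext (restr x) (x ord_max) = x.
Proof.
apply/ffunP => j; rewrite ffunE; case: insubP => [i _ ij|].
  by rewrite ffunE; congr (x _); apply: val_inj.
rewrite -leqNgt => jn; congr (x _); apply: val_inj => /=.
by apply/eqP; rewrite eqn_leq jn -ltnS ltn_ord.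
Qed.

Lemma wt_ext n (a : bvec n) d : wt (ext a d) = (wt a + d)%N.
Proof. by rewrite !wtE big_ord_recr /= ext_max; under eq_bigr do rewrite ext_widen. Qed.

Lemma gb_ext n (g : bvec n -> bool) b y c :
  gb g b (ext y c) = if c then b (+) g (bcompl y) else g y.
Proof.
rewrite /gb ext_max (_ : [ffun i => ext y c (widen_ord (leqnSn n) i)] = y).
  by case: c; rewrite /= ?addbF.
by apply/ffunP => i; rewrite ffunE ext_widen.
Qed.

Section SpectrumGb.
Variable R : realType.

Lemma sum_ext n (F : bvec n.+1 -> R) :
  \sum_x F x = \sum_(c : bool) \sum_(y : bvec n) F (ext y c).
Proof.
rewrite (reindex (fun p : bvec n * bool => ext p.1 p.2)) /=.
  by rewrite exchange_big /= pair_big.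
exists (fun x => (restr x, x ord_max)) => [[y c] _|x _] /=.
  by rewrite restr_ext ext_max.
by rewrite ext_restr.
Qed.

Lemma chi_ext n (y a : bvec n) c d :
  chi R (ext y c) (ext a d) = chi R y a * (-1) ^+ (c && d).
Proof. by rewrite !chiE big_ord_recr /= !ext_max; under eq_bigr do rewrite !ext_widen. Qed.

(* The spectrum of g_b: W_{g_b}(a, d) = W_g(a) if d = b + wt(a) mod 2, else 0.
   The second half of the sum is the first one reindexed by y -> ~y. *)
Lemma walsh_gb n (g : bvec n -> bool) b a d :
  walsh R (gb g b) (ext a d) = if d == b (+) odd (wt a) then walsh R g a else 0.
Proof.
rewrite !walshE sum_ext big_bool /=.
set S := \sum_y (-1) ^+ g y * chi R y a.
have half1 : \sum_y (-1) ^+ gb g b (ext y true) * chi R (ext y true) (ext a d)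
           = (-1) ^+ b * (-1) ^+ d * (-1) ^+ odd (wt a) * S.
  rewrite /S big_distrr /= (reindex_inj (can_inj (@bcomplK n))) /=.
  apply: eq_bigr => y _; rewrite gb_ext bcomplK chi_ext chi_compl signr_addb /=.
  by ring.
have half0 : \sum_y (-1) ^+ gb g b (ext y false) * chi R (ext y false) (ext a d) = S.
  by apply: eq_bigr => y _; rewrite gb_ext chi_ext /= expr0 mulr1.
rewrite {}half1 {}half0 exprS; have := two_expf_neq0 R n.
by case: b; case: d; case: (odd (wt a)); rewrite /= ?expr0 ?expr1 ?mulr0 ?mul0r => ?; field.
Qed.

(* Influence of g_b: the parity constraint on the extra coordinate adds
   eps_b(g) to Inf(g). *)
Lemma Inf_gb n (g : bvec n -> bool) b : Inf R (gb g b) = Inf R g + epsb R g b.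
Proof.
rewrite !Inf_walsh /epsb (big_mkcond (fun a => odd (wt a) != b)) -big_split /=.
rewrite sum_ext exchange_big /=; apply: eq_bigr => a _.
rewrite big_bool /= !walsh_gb !wt_ext.
case: b; case: (odd (wt a)); rewrite /= ?addn0 ?addn1 ?expr0n /= ?mulr0 ?addr0 ?add0r;
  rewrite ?natrD //; ring.
Qed.

End SpectrumGb.

(* F_2^(k*l) as k blocks of l bits: position p is bit (p %% l) of block
   (p %/ l), the inverse of the indexing blk of the disjoint composition. *)
Lemma div_lt k l (p : 'I_(k * l)) : (p %/ l < k)%N.
Proof.
have l_gt0 : (0 < l)%N by case: l p => [|l] [] //=; rewrite muln0.
by rewrite ltn_divLR // ltn_ord.
Qed.

Lemma mod_lt k l (p : 'I_(k * l)) : (p %% l < l)%N.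
Proof.
have l_gt0 : (0 < l)%N by case: l p => [|l] [] //=; rewrite muln0.
by rewrite ltn_pmod.
Qed.

Definition blk_of k l (p : 'I_(k * l)) : 'I_k := Ordinal (div_lt p).
Definition pos_of k l (p : 'I_(k * l)) : 'I_l := Ordinal (mod_lt p).

Lemma blk_of_pos k l (p : 'I_(k * l)) : blk (blk_of p) (pos_of p) = p.
Proof. by apply: val_inj => /=; rewrite -divn_eq. Qed.

Lemma blk_of_blk k l (i : 'I_k) (j : 'I_l) : blk_of (blk i j) = i.
Proof.
apply: val_inj => /=; have jl := ltn_ord j.
by rewrite divnMDl ?divn_small ?addn0 //; apply: leq_ltn_trans jl.
Qed.

Lemma pos_of_blk k l (i : 'I_k) (j : 'I_l) : pos_of (blk i j) = j.
Proof. by apply: val_inj => /=; rewrite modnMDl modn_small. Qed.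

Lemma big_blk (T : Type) (idx : T) (op : Monoid.com_law idx) k l (F : 'I_(k * l) -> T) :
  \big[op/idx]_p F p = \big[op/idx]_(i < k) \big[op/idx]_(j < l) F (blk i j).
Proof.
rewrite pair_big /= (reindex (fun q : 'I_k * 'I_l => blk q.1 q.2)) //.
exists (fun p => (blk_of p, pos_of p)) => [[i j] _|p _] /=.
  by rewrite blk_of_blk pos_of_blk.
by rewrite blk_of_pos.
Qed.

Definition unblocks k l (X : {ffun 'I_k -> bvec l}) : bvec (k * l) :=
  [ffun p => X (blk_of p) (pos_of p)].

Lemma unblocksE k l (X : {ffun 'I_k -> bvec l}) i j : unblocks X (blk i j) = X i j.
Proof. by rewrite ffunE blk_of_blk pos_of_blk. Qed.

Lemma unblocks_bij k l : bijective (@unblocks k l).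
Proof.
exists (fun x : bvec (k * l) => [ffun i => [ffun j => x (blk i j)]]).
  by move=> X; apply/ffunP => i; apply/ffunP => j; rewrite !ffunE blk_of_blk pos_of_blk.
by move=> x; apply/ffunP => p; rewrite !ffunE blk_of_pos.
Qed.

Lemma wt_unblocks k l (A : {ffun 'I_k -> bvec l}) :
  wt (unblocks A) = (\sum_i wt (A i))%N.
Proof.
rewrite wtE big_blk; apply: eq_bigr => i _; rewrite wtE.
by apply: eq_bigr => j _; rewrite unblocksE.
Qed.

Lemma dcomp_unblocks k l (f : bvec k -> bool) (h : bvec l -> bool) X :
  bool_dcomp f h (unblocks X) = f [ffun i => h (X i)].
Proof.
rewrite /bool_dcomp; congr f; apply/ffunP => i; rewrite !ffunE; congr h.
by apply/ffunP => j; rewrite ffunE unblocksE.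
Qed.

Definition pat k l (A : {ffun 'I_k -> bvec l}) : bvec k := [ffun i => A i != bz l].

Section SpectrumComposition.
Variable R : realType.

Lemma sum_unblocks k l (F : bvec (k * l) -> R) :
  \sum_x F x = \sum_(X : {ffun 'I_k -> bvec l}) F (unblocks X).
Proof. by rewrite (reindex (@unblocks k l)) //; apply: onW_bij; apply: unblocks_bij. Qed.

Lemma chi_unblocks k l (X A : {ffun 'I_k -> bvec l}) :
  chi R (unblocks X) (unblocks A) = \prod_i chi R (X i) (A i).
Proof.
rewrite chiE big_blk; apply: eq_bigr => i _; rewrite chiE.
by apply: eq_bigr => j _; rewrite !unblocksE.
Qed.

(* The block factor of the composition spectrum: for an active block (c = true)
   the spectrum of h, for an inactive one the indicator of 0. *)
Definition psi l (h : bvec l -> bool) (c : bool) (t : bvec l) : R :=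
  if c then walsh R h t else (t == bz l)%:R.

Lemma sum_psi l (h : bvec l -> bool) c (a : bvec l) :
  \sum_t (-1) ^+ (h t && c) * chi R t a = 2 ^+ l * psi h c a.
Proof.
rewrite /psi; case: c.
  rewrite walshE mulrA mulfV ?two_expf_neq0 // mul1r.
  by apply: eq_bigr => t _; rewrite andbT.
under eq_bigr do rewrite andbF expr0 mul1r.
by rewrite sum_chi; case: eqP; rewrite ?mulr1 ?mulr0.
Qed.

(* Spectrum of f <> h: expand (-1)^f by Fourier inversion, then the sum over
   the blocks factorizes. *)
Lemma walsh_dcomp_sum k l (f : bvec k -> bool) (h : bvec l -> bool) A :
  walsh R (bool_dcomp f h) (unblocks A) = \sum_w walsh R f w * \prod_i psi h (w i) (A i).
Proof.
have expand (X : {ffun 'I_k -> bvec l}) :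
    (-1) ^+ f [ffun i => h (X i)] * chi R (unblocks X) (unblocks A) =
    \sum_w walsh R f w * \prod_i ((-1) ^+ (h (X i) && w i) * chi R (X i) (A i)).
  rewrite -walsh_inversion mulr_suml chi_unblocks; apply: eq_bigr => w _.
  rewrite chiE -mulrA -big_split /=; congr (_ * _); apply: eq_bigr => i _.
  by rewrite ffunE.
rewrite walshE sum_unblocks.
under eq_bigr do rewrite dcomp_unblocks expand.
rewrite exchange_big /= big_distrr /=; apply: eq_bigr => w _.
rewrite -big_distrr /=.
rewrite -(bigA_distr_bigA (fun i (t : bvec l) => (-1) ^+ (h t && w i) * chi R t (A i))) /=.
under eq_bigr => i _ do rewrite sum_psi.
rewrite big_split /= prodr_const card_ord -exprM mulnC mulrCA mulrA.
by rewrite mulrA mulfVK ?two_expf_neq0.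
Qed.

(* For balanced h only w = pat A contributes: an inactive block forces A_i = 0,
   an active one A_i <> 0 since W_h(0) = 0. *)
Lemma prod_psi_off k l (h : bvec l -> bool) (A : {ffun 'I_k -> bvec l}) w :
  balanced h -> w != pat A -> \prod_i psi h (w i) (A i) = 0.
Proof.
move=> bal w_neq.
have [i wi] : exists i, w i != pat A i.
  apply/existsP; apply: contraNT w_neq; rewrite negb_exists => /forallP w_eq.
  by apply/eqP/ffunP => i; have := w_eq i; rewrite negbK => /eqP.
rewrite (bigD1 i) //= /psi; move: wi; rewrite ffunE.
case: (w i) => /=; first by rewrite negbK => /eqP ->; rewrite walsh0_balanced // mul0r.
by case: (A i == bz l) => //= _; rewrite mulr0n mul0r.
Qed.

Lemma walsh_dcomp k l (f : bvec k -> bool) (h : bvec l -> bool) A : balanced h ->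
  walsh R (bool_dcomp f h) (unblocks A) =
  walsh R f (pat A) * \prod_i psi h (pat A i) (A i).
Proof.
move=> bal; rewrite walsh_dcomp_sum (bigD1 (pat A)) //= [X in _ + X]big1 ?addr0 //.
by move=> w w_neq; rewrite prod_psi_off ?mulr0.
Qed.

Lemma walsh_dcomp_sq k l (f : bvec k -> bool) (h : bvec l -> bool) A : balanced h ->
  walsh R (bool_dcomp f h) (unblocks A) ^+ 2 =
  \sum_w walsh R f w ^+ 2 * \prod_i psi h (w i) (A i) ^+ 2.
Proof.
move=> bal; rewrite walsh_dcomp // (bigD1 (pat A)) //= [X in _ + X]big1 ?addr0.
  by rewrite exprMn prodrXl.
by move=> w w_neq; rewrite prodrXl prod_psi_off ?expr0n ?mulr0.
Qed.

Lemma sum_psi2 l (h : bvec l -> bool) c : \sum_t psi h c t ^+ 2 = 1.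
Proof.
case: c; first exact: parseval.
rewrite /psi (bigD1 (bz l)) //= eqxx [X in _ + X]big1 ?addr0 ?expr1n //.
by move=> t /negbTE ->; rewrite expr0n.
Qed.

Lemma sum_wt_psi2 l (h : bvec l -> bool) c :
  \sum_t (wt t)%:R * psi h c t ^+ 2 = (c : nat)%:R * Inf R h.
Proof.
case: c; first by rewrite Inf_walsh mul1r.
rewrite /psi (bigD1 (bz l)) //= wt0 [X in _ + X]big1 ?mul0r ?addr0 //.
by move=> t /negbTE ->; rewrite expr0n mulr0.
Qed.

Lemma mean_wt_blocks k l (h : bvec l -> bool) (w : bvec k) :
  \sum_(A : {ffun 'I_k -> bvec l})
      (\sum_i wt (A i))%N%:R * \prod_i psi h (w i) (A i) ^+ 2
  = (wt w)%:R * Inf R h.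
Proof.
transitivity (\sum_(A : {ffun 'I_k -> bvec l}) \sum_j \prod_i
    ((if i == j then (wt (A i))%:R else 1) * psi h (w i) (A i) ^+ 2)).
  apply: eq_bigr => A _; rewrite natr_sum mulr_suml; apply: eq_bigr => j _.
  rewrite [RHS]big_split /=; congr (_ * _).
  by rewrite (bigD1 j) //= eqxx big1 ?mulr1 // => i /negbTE ->.
rewrite exchange_big /= wtE natr_sum mulr_suml; apply: eq_bigr => j _.
rewrite -(bigA_distr_bigA (fun i (t : bvec l) =>
   (if i == j then (wt t)%:R else 1) * psi h (w i) t ^+ 2)) /=.
rewrite (bigD1 j) //= [X in _ * X]big1 ?mulr1.
  by under eq_bigr do rewrite eqxx; rewrite sum_wt_psi2.
by move=> i /negbTE ij; under eq_bigr do rewrite ij mul1r; rewrite sum_psi2.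
Qed.

Lemma Inf_dcomp k l (f : bvec k -> bool) (h : bvec l -> bool) :
  balanced h -> Inf R (bool_dcomp f h) = Inf R f * Inf R h.
Proof.
move=> bal; rewrite [Inf R (bool_dcomp f h)]Inf_walsh [Inf R f]Inf_walsh sum_unblocks.
under eq_bigr do rewrite walsh_dcomp_sq // wt_unblocks big_distrr /=.
rewrite exchange_big /= mulr_suml; apply: eq_bigr => w _.
under eq_bigr do rewrite mulrCA.
by rewrite -big_distrr /= mean_wt_blocks mulrCA mulrA.
Qed.

End SpectrumComposition.

Section MinEntropy.
Variable R : realType.

Definition nlog2 (x : R) : R := log2 x^-1.

Lemma nlog2E x : 0 < x -> nlog2 x = - log2 x.
Proof. by move=> x_gt0; rewrite /nlog2 /log2 lnV ?posrE // mulNr. Qed.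

Lemma nlog2_1 : nlog2 1 = 0.
Proof. by rewrite /nlog2 invr1 /log2 ln1 mul0r. Qed.

Lemma nlog2M x y : 0 < x -> 0 < y -> nlog2 (x * y) = nlog2 x + nlog2 y.
Proof.
by move=> x_gt0 y_gt0; rewrite !nlog2E ?mulr_gt0 // /log2 lnM ?posrE // mulrDl opprD.
Qed.

Lemma nlog2_prod (I : finType) (x : I -> R) :
  (forall i, 0 < x i) -> nlog2 (\prod_i x i) = \sum_i nlog2 (x i).
Proof.
move=> x_gt0; suff [] : 0 < \prod_i x i /\ nlog2 (\prod_i x i) = \sum_i nlog2 (x i) by [].
elim/big_rec2: _ => [|i y1 y2 _ [y2_gt0 <-]]; first by rewrite ltr01 nlog2_1.
by rewrite mulr_gt0 // nlog2M.
Qed.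

Lemma nlog2_le x y : 0 < x -> 0 < y -> (nlog2 x <= nlog2 y) = (y <= x).
Proof.
move=> x_gt0 y_gt0; have ln2_gt0 : 0 < ln (2 : R) by rewrite ln_gt0 // ltr1n.
by rewrite !nlog2E // lerN2 /log2 ler_pM2r ?invr_gt0 // ler_ln ?posrE.
Qed.

Lemma nlog2_ge0 x : 0 < x -> x <= 1 -> 0 <= nlog2 x.
Proof. by move=> x_gt0 x_le1; rewrite -nlog2_1 nlog2_le. Qed.

Lemma sqr_neq0_gt0 (x : R) : x ^+ 2 != 0 -> 0 < x ^+ 2.
Proof. by move=> x2_neq0; rewrite lt0r x2_neq0 sqr_ge0. Qed.

Lemma sum_support k (w : bvec k) (x : R) : \sum_(i | w i) x = (wt w)%:R * x.
Proof.
rewrite big_mkcond /= wtE natr_sum mulr_suml; apply: eq_bigr => i _.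
by case: (w i); rewrite ?mul1r ?mul0r.
Qed.

Lemma fine_bigmin (I : finType) (P : pred I) (F : I -> R) m :
  (exists2 i, P i & F i = m) -> (forall i, P i -> m <= F i) ->
  fine (\big[Order.min/+oo%E]_(i | P i) (F i)%:E) = m.
Proof.
move=> [i Pi <-] F_ge; suff -> : \big[Order.min/+oo%E]_(j | P j) (F j)%:E = (F i)%:E by [].
apply/le_anti/andP; split; first exact: bigmin_le_cond.
by apply/bigmin_geP; split => [|j Pj]; rewrite ?leey ?lee_fin ?F_ge.
Qed.

Lemma Hmin_char n (f : bvec n -> bool) m :
  (exists2 a, walsh R f a ^+ 2 != 0 & nlog2 (walsh R f a ^+ 2) = m) ->
  (forall a, walsh R f a ^+ 2 != 0 -> m <= nlog2 (walsh R f a ^+ 2)) ->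
  Hmin R f = m.
Proof. exact: fine_bigmin. Qed.

Lemma Hmin_attained n (f : bvec n -> bool) :
  exists a, [/\ walsh R f a ^+ 2 != 0, Hmin R f = nlog2 (walsh R f a ^+ 2) &
    forall a', walsh R f a' ^+ 2 != 0 -> Hmin R f <= nlog2 (walsh R f a' ^+ 2)].
Proof.
have [a0 Wa0] := walsh_support R f.
case: (arg_minP (P := fun a => walsh R f a ^+ 2 != 0) (fun a => nlog2 (walsh R f a ^+ 2)) Wa0).
move=> a Wa a_min.
have Hmin_a : Hmin R f = nlog2 (walsh R f a ^+ 2) by apply: Hmin_char => //; exists a.
by exists a; split => // a' Wa'; rewrite Hmin_a a_min.
Qed.

(* By Parseval every squared coefficient is at most 1, so H >= 0. *)
Lemma Hmin_ge0 n (f : bvec n -> bool) : 0 <= Hmin R f.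
Proof.
have [a [Wa -> _]] := Hmin_attained f.
rewrite nlog2_ge0 ?sqr_neq0_gt0 // -(parseval R f) (bigD1 a) //= lerDl.
by apply: sumr_ge0 => a' _; apply: sqr_ge0.
Qed.

Definition maxW2 k (f : bvec k -> bool) (i : nat) : R :=
  \big[Num.max/0]_(w : bvec k | wt w == i) walsh R f w ^+ 2.

Lemma le_maxW2 k (f : bvec k -> bool) w : walsh R f w ^+ 2 <= maxW2 f (wt w).
Proof. by rewrite /maxW2; apply: le_bigmax_cond. Qed.

Lemma maxW2_attained k (f : bvec k -> bool) i :
  0 < maxW2 f i -> exists2 w, wt w = i & maxW2 f i = walsh R f w ^+ 2.
Proof.
move=> max_gt0; have [w wt_w] : exists w : bvec k, wt w == i.
  apply/existsP; apply: contraTT max_gt0; rewrite negb_exists => /forallP no_w.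
  by rewrite /maxW2 big_pred0 ?ltxx // => w; apply/negbTE.
rewrite /maxW2; have [w' w'_i ->] :=
  eq_bigmax w (fun w => wt w == i) (fun w => walsh R f w ^+ 2) wt_w (fun w _ => sqr_ge0 _).
by exists w' => //; apply/eqP.
Qed.

Lemma walsh_dcomp_neq0 k l (f : bvec k -> bool) (h : bvec l -> bool) A :
  balanced h -> walsh R (bool_dcomp f h) (unblocks A) ^+ 2 != 0 ->
  walsh R f (pat A) ^+ 2 != 0 /\ forall i, pat A i -> walsh R h (A i) ^+ 2 != 0.
Proof.
move=> bal; rewrite walsh_dcomp // exprMn -prodrXl mulf_eq0 negb_or.
case/andP=> Wf_neq0 /prodf_neq0 Wh_neq0; split=> // i pat_i.
by move: (Wh_neq0 i isT); rewrite /psi pat_i.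
Qed.

Lemma nlog2_walsh_dcomp k l (f : bvec k -> bool) (h : bvec l -> bool) A :
  balanced h -> walsh R (bool_dcomp f h) (unblocks A) ^+ 2 != 0 ->
  nlog2 (walsh R (bool_dcomp f h) (unblocks A) ^+ 2) =
  nlog2 (walsh R f (pat A) ^+ 2) + \sum_(i | pat A i) nlog2 (walsh R h (A i) ^+ 2).
Proof.
move=> bal nz; have [Wf_neq0 Wh_neq0] := walsh_dcomp_neq0 bal nz.
have psi_pat i : psi R h (pat A i) (A i) = if pat A i then walsh R h (A i) else 1.
  by rewrite /psi ffunE; case: eqP => //= ->; rewrite eqxx.
have psi2_gt0 i : 0 < psi R h (pat A i) (A i) ^+ 2.
  by rewrite psi_pat; case: ifP => [/Wh_neq0/sqr_neq0_gt0 //|_]; rewrite expr1n ltr01.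
rewrite walsh_dcomp // exprMn -prodrXl nlog2M ?sqr_neq0_gt0 ?prodr_gt0 // nlog2_prod //.
congr (_ + _); rewrite [RHS]big_mkcond /=; apply: eq_bigr => i _.
by rewrite psi_pat; case: (pat A i); rewrite ?expr1n ?nlog2_1.
Qed.

Lemma Hmin_dcomp k l (f : bvec k -> bool) (h : bvec l -> bool) : balanced h ->
  Hmin R (bool_dcomp f h) =
  fine (\big[Order.min/+oo%E]_(i < k.+1 | 0 < maxW2 f i)
          (- log2 (maxW2 f i) + i%:R * Hmin R h)%:E).
Proof.
move=> bal; set H := Hmin R h.
pose m (i : 'I_k.+1) := - log2 (maxW2 f i) + i%:R * H.
pose wt_ord (w : bvec k) : 'I_k.+1 := Ordinal (wt_le w : (wt w < k.+1)%N).
have maxW2_pos w : walsh R f w ^+ 2 != 0 -> 0 < maxW2 f (wt_ord w).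
  by move=> Ww; apply: lt_le_trans (le_maxW2 f w); apply: sqr_neq0_gt0.
have [w1 /maxW2_pos max1_pos] := walsh_support R f.
case: (arg_minP (P := fun i : 'I_k.+1 => 0 < maxW2 f i) m max1_pos) => i0 max0_pos i0_min.
have -> : fine (\big[Order.min/+oo%E]_(i : 'I_k.+1 | 0 < maxW2 f i) (m i)%:E) = m i0.
  by apply: fine_bigmin => //; exists i0.
have [be [Wbe Hbe Hbe_min]] := Hmin_attained h.
apply: Hmin_char.
  have [w0 wt_w0 max0E] := maxW2_attained max0_pos.
  have be_neq0 : be != bz l.
    by apply: contraNneq Wbe => ->; rewrite walsh0_balanced // expr0n.
  pose A : {ffun 'I_k -> bvec l} := [ffun i => if w0 i then be else bz l].
  have patA : pat A = w0.
    by apply/ffunP => i; rewrite !ffunE; case: (w0 i); rewrite ?eqxx.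
  have WG_neq0 : walsh R (bool_dcomp f h) (unblocks A) ^+ 2 != 0.
    rewrite walsh_dcomp // patA exprMn -max0E -prodrXl gt_eqF ?mulr_gt0 ?prodr_gt0 //.
    by move=> i _; rewrite /psi !ffunE; case: (w0 i); rewrite ?sqr_neq0_gt0 ?eqxx ?expr1n.
  exists (unblocks A) => //; rewrite nlog2_walsh_dcomp // patA -max0E nlog2E //.
  rewrite /m -wt_w0 -sum_support; congr (_ + _); apply: eq_bigr => i w0_i.
  by rewrite ffunE w0_i -Hbe.
move=> x; have [toA _ toAK] := unblocks_bij k l; rewrite -[x]toAK.
move: (toA x) => A WG_neq0; have [Wf_neq0 Wh_neq0] := walsh_dcomp_neq0 bal WG_neq0.
apply: le_trans (i0_min _ (maxW2_pos _ Wf_neq0)) _.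
rewrite /m nlog2_walsh_dcomp //= -sum_support; apply: lerD.
  by rewrite -nlog2E ?maxW2_pos // nlog2_le ?maxW2_pos ?sqr_neq0_gt0 // le_maxW2.
by apply: ler_sum => i pat_i; apply: Hbe_min; apply: Wh_neq0.
Qed.

End MinEntropy.

(* For a plateaued function all nonzero squared coefficients are equal, so
   each of them carries exactly the min-entropy. *)
Lemma plateaued_nlog2 (R : realType) n (f : bvec n -> bool) : plateaued R f ->
  forall a, walsh R f a ^+ 2 != 0 -> nlog2 (walsh R f a ^+ 2) = Hmin R f.
Proof.
case=> c f_pl; have sq_c a : walsh R f a ^+ 2 != 0 -> walsh R f a ^+ 2 = c ^+ 2.
  by case: (f_pl a) => [->|[]->] => [|_|_]; rewrite ?expr2 ?mulr0 ?eqxx ?mulrNN.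
have [a0 [Wa0 -> _]] := Hmin_attained R f.
by move=> a Wa; rewrite (sq_c a Wa) (sq_c a0 Wa0).
Qed.

Section PlateauedCase.
Variables (R : realType) (n : nat) (g : bvec n -> bool) (b : bool) (t : nat).
Hypothesis parity_t : odd t = b.
Hypothesis plateaued_g : plateaued R g.
Hypothesis resilient_t : resilient R g t.
Hypothesis not_resilient_t1 : ~ resilient R g t.+1.

(* A nonzero coefficient of g_b comes from a nonzero coefficient W_g(a),
   which has weight > t; the parity constraint on the last coordinate then
   forces total weight >= t + 2. *)
Lemma gb_support_weight w : walsh R (gb g b) w ^+ 2 != 0 ->
  nlog2 (walsh R (gb g b) w ^+ 2) = Hmin R g /\ (t.+2 <= wt w)%N.
Proof.
have [a [d ->]] : exists a d, w = ext a d by exists (restr w), (w ord_max); rewrite ext_restr.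
rewrite walsh_gb wt_ext; case: ifP => [/eqP ->|_]; last by rewrite expr2 mulr0 eqxx.
move=> Wa; split; first exact: plateaued_nlog2 Wa.
have : (t < wt a)%N by rewrite ltnNge; apply: contra Wa => /resilient_t ->; rewrite expr0n.
rewrite leq_eqVlt -parity_t => /orP [/eqP <-|lt_wt] /=.
  by case: (odd t); rewrite addn1.
exact: leq_trans lt_wt (leq_addr _ _).
Qed.

(* The bound t + 2 is attained: extend a nonzero coefficient of weight t + 1. *)
Lemma gb_weight_attained : exists w, wt w = t.+2 /\ walsh R (gb g b) w ^+ 2 != 0.
Proof.
have [a /andP [wt_a Wa]] : exists a, (wt a <= t.+1)%N && (walsh R g a != 0).
  apply/existsP/contraT => /existsPn no_a; exfalso; apply: not_resilient_t1 => a wt_a.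
  by apply/eqP; move: (no_a a); rewrite wt_a negbK.
have wt_a_eq : wt a = t.+1.
  apply/eqP; rewrite eqn_leq wt_a ltnNge; apply: contra Wa => /resilient_t ->.
  by rewrite eqxx.
exists (ext a true); rewrite wt_ext walsh_gb wt_a_eq addn1 -parity_t /=.
by case: (odd t); rewrite /= sqrf_eq0.
Qed.

Lemma acoef_plateaued i : 0 < acoef R g b i ->
  - log2 (acoef R g b i) = Hmin R g /\ (t.+2 <= i)%N.
Proof.
move=> acoef_gt0; have [w wt_w acoef_w] := maxW2_attained acoef_gt0.
have Ww : walsh R (gb g b) w ^+ 2 != 0 by rewrite -acoef_w; exact: lt0r_neq0 acoef_gt0.
have [nlog2_H le_wt] := gb_support_weight Ww.
change (- log2 (maxW2 R (gb g b) i) = Hmin R g /\ (t.+2 <= i)%N).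
by rewrite acoef_w -nlog2E ?sqr_neq0_gt0 // -wt_w.
Qed.

Lemma minterm_plateaued :
  fine (\big[Order.min/+oo%E]_(i < n.+2 | 0 < acoef R g b i)
          (- log2 (acoef R g b i) + i%:R * Hmin R g)%:E) = (t + 3)%:R * Hmin R g.
Proof.
have H_ge0 := Hmin_ge0 R g.
have [w [wt_w Ww]] := gb_weight_attained.
have acoef_w : 0 < acoef R g b (wt w).
  exact: lt_le_trans (sqr_neq0_gt0 Ww) (le_maxW2 _ _ w).
apply: fine_bigmin.
  exists (Ordinal (wt_le w : (wt w < n.+2)%N)) => //=.
  have [-> _] := acoef_plateaued acoef_w.
  by rewrite wt_w -[X in X + _]mul1r -mulrDl addrC natr1 addn3.
move=> i /acoef_plateaued [-> le_i].
by rewrite -[X in _ <= X + _]mul1r -mulrDl ler_wpM2r // addrC natr1 ler_nat addn3.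
Qed.

End PlateauedCase.

Unset Implicit Arguments. Set Strict Implicit.

Theorem theorem6 (R : realType) (n : nat) (g : bvec n -> bool) (b : bool) :
  balanced g ->
  let Gb := bool_dcomp (gb g b) g in
  (Hmin R Gb / Inf R Gb =
     fine (\big[Order.min/+oo%E]_(i < n.+2 | 0 < acoef R g b i)
             (- log2 (acoef R g b i) + i%:R * Hmin R g)%:E)
     / (Inf R g * (Inf R g + epsb R g b)))
  /\
  (forall t : nat, (t < n)%N -> odd t = b ->
     plateaued R g -> resilient R g t -> ~ resilient R g t.+1 ->
     Hmin R Gb / Inf R Gb =
       Hmin R g / Inf R g * ((t + 3)%:R / (Inf R g + epsb R g b))).
Proof.
move=> bal Gb.
have Inf_Gb : Inf R Gb = Inf R g * (Inf R g + epsb R g b).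
  by rewrite Inf_dcomp // Inf_gb mulrC.
have ratio : Hmin R Gb / Inf R Gb =
    fine (\big[Order.min/+oo%E]_(i < n.+2 | 0 < acoef R g b i)
            (- log2 (acoef R g b i) + i%:R * Hmin R g)%:E)
    / (Inf R g * (Inf R g + epsb R g b)).
  by rewrite Inf_Gb Hmin_dcomp.
split=> // t _ parity_t plateaued_g res_t not_res_t1.
rewrite ratio (minterm_plateaued parity_t plateaued_g res_t not_res_t1) invfM.
by ring.
Qed.
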